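(* Let $\Gamma$ be a group and $S$ a $\Gamma$-graded inverse semigroup. Then $S$ is strongly graded if and only if the categories $\mathrm{Gr}\text{-}S$ and $\mathrm{Mod}\text{-}S_\varepsilon$ are equivalent via the restriction functor $(-)_\varepsilon$ and the induction functor $S\otimes_{S_\varepsilon}-$, together with the natural transformations $\mu:(S\otimes_{S_\varepsilon}-)_\varepsilon\to 1_{\mathrm{Mod}\text{-}S_\varepsilon}$ and $\nu: S\otimes_{S_\varepsilon}(-)_\varepsilon\to 1_{\mathrm{Gr}\text{-}S}$ given by $\mu_Y(s\otimes y)=sy$ and $\nu_X(s\otimes x)=sx$.
   Context: All semigroups have a zero. $\varepsilon$ is the identity of $\Gamma$. $S$ is $\Gamma$-graded if there is $\deg:S\setminus\{0\}\to\Gamma$ with $\deg(st)=\deg(s)\deg(t)$ whenever $st\neq0$; $S_\alpha=\deg^{-1}(\alpha)\cup\{0\}$; $S_\varepsilon$ is a subsemigroup. $S$ is strongly graded if $S_\alpha S_\beta=S_{\alpha\beta}$ for all $\alpha,\beta$. Left $S$-sets are pointed ($0_X$ with $0x=0_X$) and unital ($SX=X$); $\mathrm{Mod}\text{-}T$ is the category of unital pointed left $T$-sets with $T$-maps ($\phi(tx)=t\phi(x)$); a left $S$-set $X$ is $\Gamma$-graded if there is $\deg:X\setminus\{0_X\}\to\Gamma$ with $\deg(sx)=\deg(s)\deg(x)$ whenever $sx\neq0_X$, $X_\alpha=\deg^{-1}(\alpha)\cup\{0_X\}$; $\mathrm{Gr}\text{-}S$ has these as objects and graded $S$-maps ($\phi(X_\alpha)\subseteq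 Y_\alpha$) as morphisms. The restriction functor sends $X$ to $X_\varepsilon$ (a left $S_\varepsilon$-set) and $\phi$ to $\phi|_{X_\varepsilon}$. For a left $S_\varepsilon$-set $Y$, $S\otimes_{S_\varepsilon}Y$ is $S\times Y$ modulo the equivalence relation generated by $(st,y)\sim(s,ty)$ for $t\in S_\varepsilon$, with class of $(s,y)$ written $s\otimes y$, left $S$-action $r(s\otimes y)=rs\otimes y$, zero $0\otimes 0_Y$, and grading $(S\otimes_{S_\varepsilon}Y)_\alpha=\{s\otimes y:\deg(s)=\alpha\}\cup\{0\otimes 0_Y\}$ (i.e. $Y$ is given the trivial grading); the induction functor sends $Y$ to $S\otimes_{S_\varepsilon}Y$ and $\phi$ to $1_S\otimes\phi$, $s\otimes y\mapsto s\otimes\phi(y)$. *)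

From Stdlib Require Import Relations.
From Stdlib Require Import ssreflect ssrfun.
Set Implicit Arguments.
Unset Strict Implicit.

Record Group := {
  gcar :> Type;
  gmul : gcar -> gcar -> gcar;
  gone : gcar;
  ginv : gcar -> gcar;
  gmulA : forall a b c, gmul a (gmul b c) = gmul (gmul a b) c;
  gmul1 : forall a, gmul gone a = a;
  gmulV : forall a, gmul (ginv a) a = gone
}.

Record Semigroup0 := {
  scar :> Type;
  smul : scar -> scar -> scar;
  szero : scar;
  smulA : forall a b c, smul a (smul b c) = smul (smul a b) c;
  smul0l : forall a, smul szero a = szero;
  smul0r : forall a, smul a szero = szero
}.

Arguments smul {s}.
Arguments szero {s}.
Arguments gmul {g}.
Arguments gone {g}.

Definition inverse_semigroup (S : Semigroup0) : Prop :=
  forall s : S, exists! t : S, smul (smul s t) s = s /\ smul (smul t s) t = t.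

Section Graded.
Variables (G : Group) (S : Semigroup0) (deg : S -> G).

(* deg is only meaningful on S \ {0}; its value at 0 is irrelevant. *)
Definition graded : Prop :=
  forall s t : S, smul s t <> szero -> deg (smul s t) = gmul (deg s) (deg t).

Definition inS (a : G) (s : S) : Prop := s = szero \/ deg s = a.

Definition strongly_graded : Prop :=
  forall (a b : G) (u : S),
    inS (gmul a b) u <-> exists s t, inS a s /\ inS b t /\ u = smul s t.

Record SSet := {
  xcar :> Type;
  act : S -> xcar -> xcar;
  xzero : xcar;
  actA : forall s t x, act (smul s t) x = act s (act t x);
  act0 : forall x, act szero x = xzero;
  xunital : forall x, exists s x', x = act s x'
}.

Record GrSSet := {
  gset :> SSet;
  gdeg : gset -> G;
  gdegP : forall s x, act s x <> xzero gset ->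
            gdeg (act s x) = gmul (deg s) (gdeg x)
}.

Definition inX (X : GrSSet) (a : G) (x : X) : Prop :=
  x = xzero X \/ gdeg x = a.

(* Unital pointed left S_eps-sets (objects of Mod-S_eps).  The action is
   given as a function on S, but only its values on S_eps are used
   anywhere (axioms, tensor product, morphisms, mu). *)
Record SeSet := {
  ycar :> Type;
  yact : S -> ycar -> ycar;
  yzero : ycar;
  yactA : forall s t y, inS gone s -> inS gone t ->
            yact (smul s t) y = yact s (yact t y);
  yact0 : forall y, yact szero y = yzero;
  yunital : forall y, exists t y', inS gone t /\ y = yact t y'
}.

(* Tensor product S (x)_{S_eps} Y, where Y is the subset of a type T given
   by a predicate P and stable under the S_eps-action a: the equivalence
   relation on S * T generated by (st, y) ~ (s, ty) for t in S_eps, P y.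
   Elements of S (x) Y are the classes of pairs p with P p.2. *)
Inductive tstep (T : Type) (a : S -> T -> T) (P : T -> Prop) :
    S * T -> S * T -> Prop :=
  | tstep_intro (s t : S) (y : T) :
      inS gone t -> P y -> tstep a P (smul s t, y) (s, a t y).

Definition teq (T : Type) (a : S -> T -> T) (P : T -> Prop) :
    relation (S * T) := clos_refl_sym_trans _ (tstep a P).

(* mu_Y : (S (x) Y)_eps -> Y, s (x) y |-> s y, is a well-defined
   isomorphism in Mod-S_eps (has an inverse S_eps-map). *)
Definition mu_iso (Y : SeSet) : Prop :=
  let R := teq (@yact Y) (fun _ => True) in
  (forall p q : S * Y, inS gone p.1 -> inS gone q.1 -> R p q ->
       yact p.1 p.2 = yact q.1 q.2) /\
  exists g : Y -> S * Y,
    (forall y, inS gone (g y).1) /\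
    (forall y, yact (g y).1 (g y).2 = y) /\
    (forall p : S * Y, inS gone p.1 -> R (g (yact p.1 p.2)) p) /\
    (forall t y, inS gone t -> R (g (yact t y)) (smul t (g y).1, (g y).2)).

(* nu_X : S (x) X_eps -> X, s (x) x |-> s x, is a well-defined
   isomorphism in Gr-S (has an inverse graded S-map). *)
Definition nu_iso (X : GrSSet) : Prop :=
  let R := teq (@act X) (inX gone) in
  (forall p q : S * X, inX gone p.2 -> inX gone q.2 -> R p q ->
       act p.1 p.2 = act q.1 q.2) /\
  exists g : X -> S * X,
    (forall x, inX gone (g x).2) /\
    (forall x, act (g x).1 (g x).2 = x) /\
    (forall p : S * X, inX gone p.2 -> R (g (act p.1 p.2)) p) /\
    (forall s x, R (g (act s x)) (smul s (g x).1, (g x).2)) /\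
    (forall a x, inX a x ->
       exists p : S * X, inS a p.1 /\ inX gone p.2 /\ R (g x) p).

End Graded.

From Stdlib Require Import ssreflect ssrfun ssrbool.
From Stdlib Require Import ClassicalEpsilon Relations.
Set Implicit Arguments.
Unset Strict Implicit.

(* Restricting an induced S_ε-set gives back Y for any graded inverse semigroup:
   idempotents commute, so two idempotents e, f of S_ε fixing y give
   e ⊗ y = ef ⊗ y = fe ⊗ y = f ⊗ y, and s ⊗ z = ss⁻¹ ⊗ sz for s in S_ε.
   For a graded S-set X the map s ⊗ x ↦ sx is always injective: if
   sz = s'z' ≠ 0 with z, z' in X_ε then deg s = deg s', so s'⁻¹s lies in S_ε and
   s ⊗ z = s's'⁻¹s ⊗ z = s' ⊗ s'⁻¹sz = s' ⊗ z'.  Strong grading is what makes it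
   surjective degree by degree: if x = sx' has degree α, split s = uw with u in
   S_α; then wx' lies in X_ε and x = u ⊗ wx'.  Conversely, the inverse of this
   map for S itself, with degrees shifted by β⁻¹, factors every element of
   S_αβ through S_α S_β. *)

Section GroupFacts.
Variable G : Group.
Implicit Types a b c : G.

Lemma gmulVr a : gmul a (ginv a) = gone.
Proof.
rewrite -[gmul a _]gmul1 -[in gmul gone _](gmulV (ginv a)).
by rewrite -gmulA [gmul (ginv a) (gmul a _)]gmulA gmulV gmul1 gmulV.
Qed.

Lemma gmul1r a : gmul a gone = a.
Proof. by rewrite -(gmulV a) gmulA gmulVr gmul1. Qed.

Lemma gmulIr a b c : gmul b a = gmul c a -> b = c.
Proof. by move=> e; rewrite -[b]gmul1r -(gmulVr a) gmulA e -gmulA gmulVr gmul1r. Qed.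

End GroupFacts.

Section InverseSemigroup.
Variables (S : Semigroup0) (invS : inverse_semigroup S).
Implicit Types s t e f : S.

Definition idem e := smul e e = e.

Definition sinv s : S := proj1_sig (constructive_indefinite_description _ (invS s)).

Lemma sinvP s :
  smul (smul s (sinv s)) s = s /\ smul (smul (sinv s) s) (sinv s) = sinv s.
Proof. by rewrite /sinv; case: constructive_indefinite_description => t [[]]. Qed.

Lemma sinv_unique s t :
  smul (smul s t) s = s -> smul (smul t s) t = t -> t = sinv s.
Proof.
rewrite /sinv; case: constructive_indefinite_description => u [_ uniq_u] /= h1 h2.
by rewrite -(uniq_u t) ?(uniq_u u).
Qed.

Lemma sinv0 : sinv szero = szero.
Proof. by symmetry; apply: sinv_unique; rewrite !smul0l. Qed.

Lemma mul_sinvK s : smul s (smul (sinv s) s) = s.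
Proof. by rewrite smulA (proj1 (sinvP s)). Qed.

Lemma idem_mul_sinv s : idem (smul s (sinv s)).
Proof. by rewrite /idem smulA (proj1 (sinvP s)). Qed.

Lemma sinv_idem e : idem e -> sinv e = e.
Proof. by move=> ee; symmetry; apply: sinv_unique; rewrite !ee. Qed.

(* The inverse x of ef satisfies fxe = x by uniqueness, hence x is idempotent,
   hence equal to its own inverse ef. *)
Lemma idem_mul e f : idem e -> idem f -> idem (smul e f).
Proof.
move=> ee ff.
have eeK z : smul e (smul e z) = smul e z by rewrite smulA ee.
have ffK z : smul f (smul f z) = smul f z by rewrite smulA ff.
set x := sinv (smul e f).
have [efx xef] := sinvP (smul e f); rewrite -/x -!smulA in efx xef.
have xefK z : smul x (smul e (smul f (smul x z))) = smul x z.
  by rewrite !smulA -[in RHS]xef !smulA.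
have fxe : smul f (smul x e) = x.
  by apply: sinv_unique; rewrite -!smulA ?ffK ?eeK ?xefK.
have xx : idem x by rewrite /idem -{1}fxe -{2}fxe -!smulA xefK.
suff -> : smul e f = x by [].
by rewrite -(sinv_idem xx); apply: sinv_unique; rewrite -!smulA.
Qed.

Lemma idem_comm e f : idem e -> idem f -> smul e f = smul f e.
Proof.
move=> ee ff.
have eeK z : smul e (smul e z) = smul e z by rewrite smulA ee.
have ffK z : smul f (smul f z) = smul f z by rewrite smulA ff.
have ef := idem_mul ee ff; have fe := idem_mul ff ee.
rewrite /idem !smulA in ef fe.
rewrite -(sinv_idem (idem_mul ee ff)); symmetry.
by apply: sinv_unique; rewrite -!smulA ?ffK ?eeK !smulA.
Qed.

End InverseSemigroup.

Lemma act_xzero (S : Semigroup0) (X : SSet S) (s : S) : act s (xzero X) = xzero X.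
Proof. by rewrite -(act0 (xzero X)) -actA smul0r. Qed.

Section GradedSemigroup.
Variables (G : Group) (S : Semigroup0) (deg : S -> G).
Hypothesis gradedS : graded deg.
Implicit Types (a b : G) (s t : S).

Lemma inS0 a : inS deg a szero.
Proof. by left. Qed.

Lemma inS_deg s : inS deg (deg s) s.
Proof. by right. Qed.

Lemma inS_mul a b s t : inS deg a s -> inS deg b t -> inS deg (gmul a b) (smul s t).
Proof.
case=> [-> | <-]; first by rewrite smul0l; left.
case=> [-> | <-]; first by rewrite smul0r; left.
by case: (classic (smul s t = szero)) => [st0 | /gradedS]; [left | right].
Qed.

Lemma deg_mul_unitr s t :
  inS deg gone t -> smul s t <> szero -> deg (smul s t) = deg s.
Proof.
move=> [t0 | dt] st0; first by case: st0; rewrite t0 smul0r.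
by rewrite gradedS // dt gmul1r.
Qed.

Section TensorRelation.
Variables (T : Type) (a : S -> T -> T) (P : T -> Prop).

Lemma teq_step s t y :
  inS deg gone t -> P y -> teq deg a P (smul s t, y) (s, a t y).
Proof. by move=> t1 Py; apply: rst_step; constructor. Qed.

Lemma teq_fun_eq V (f : S * T -> V) :
  (forall s t y, inS deg gone t -> P y -> f (smul s t, y) = f (s, a t y)) ->
  forall p q, teq deg a P p q -> f p = f q.
Proof.
move=> f_step p q; elim=> {p q} [p q [s t y t1 Py] | p | p q _ -> | p q r _ -> _ ->] //.
exact: f_step.
Qed.

End TensorRelation.
Arguments teq_step {T a P} s t y.

Variable invS : inverse_semigroup S.

Lemma inS_sinv a s : inS deg a s -> inS deg (ginv a) (sinv invS s).
Proof.
case=> [-> | <-]; first by rewrite sinv0; left.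
case: (classic (s = szero)) => [-> | s0]; first by rewrite sinv0; left.
right; have sis := proj1 (sinvP invS s).
have sis0 : smul (smul s (sinv invS s)) s <> szero by rewrite sis.
have si0 : smul s (sinv invS s) <> szero by move=> e; apply: sis0; rewrite e smul0l.
move: (f_equal deg sis); rewrite gradedS // gradedS // -[in RHS](gmul1 (deg s)).
move/gmulIr=> e.
by rewrite -[LHS]gmul1 -(gmulV (deg s)) -gmulA e gmul1r.
Qed.

Lemma inS_mul_sinv s : inS deg gone (smul s (sinv invS s)).
Proof. by rewrite -(gmulVr (deg s)); exact: inS_mul (inS_deg s) (inS_sinv (inS_deg s)). Qed.

Lemma inS_sinv_mul s : inS deg gone (smul (sinv invS s) s).
Proof. by rewrite -(gmulV (deg s)); exact: inS_mul (inS_sinv (inS_deg s)) (inS_deg s). Qed.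

Section Restriction.
Variable Y : SeSet deg.
Local Notation R := (teq deg (@yact _ _ _ Y) (fun _ => True)).
Let R_step s t (y : Y) (t1 : inS deg gone t) : R (smul s t, y) (s, yact t y) :=
  teq_step s t y t1 I.
Arguments R_step : clear implicits.

Lemma mu_well_defined p q :
  inS deg gone p.1 -> inS deg gone q.1 -> R p q -> yact p.1 p.2 = yact q.1 q.2.
Proof.
(* Pairs outside S_ε × Y are sent to 0; a step (st, y) ~ (s, ty) with s outside
   S_ε and st ≠ 0 keeps st outside S_ε. *)
pose mu (u : S * Y) :=
  if excluded_middle_informative (inS deg gone u.1) then yact u.1 u.2 else yzero Y.
have mu_def u : inS deg gone u.1 -> mu u = yact u.1 u.2.
  by rewrite /mu; case: excluded_middle_informative.
have mu_step s t (y : Y) : inS deg gone t -> True -> mu (smul s t, y) = mu (s, yact t y).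
  move=> t1 _; rewrite /mu /=.
  case: (excluded_middle_informative (inS deg gone s)) => s1 /=.
    have st1 : inS deg gone (smul s t) by rewrite -(gmul1 gone); apply: inS_mul.
    by case: excluded_middle_informative => //= _; rewrite yactA.
  case: (classic (smul s t = szero)) => [-> | st0].
    by case: excluded_middle_informative => _ //=; rewrite yact0.
  case: excluded_middle_informative => //= st1.
  by case: s1; right; rewrite -(deg_mul_unitr t1 st0); case: st1 => [/st0 |].
by move=> p1 q1 pq; rewrite -mu_def // (teq_fun_eq mu_step pq) mu_def.
Qed.

Lemma teq_idem_fix e f (y : Y) :
  inS deg gone e -> inS deg gone f -> idem e -> idem f ->
  yact e y = y -> yact f y = y -> R (e, y) (f, y).
Proof.
move=> e1 f1 ee ff ey fy.
have ef := R_step f e y e1; rewrite ey (idem_comm invS ff ee) in ef.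
have fe := R_step e f y f1; rewrite fy in fe.
exact: rst_trans (rst_sym _ _ _ _ fe) ef.
Qed.

Lemma exists_idem_fixing (y : Y) :
  exists e, [/\ inS deg gone e, idem e & yact e y = y].
Proof.
have [t [y' [t1 ->]]] := yunital y.
have tt1 := inS_mul_sinv t.
exists (smul t (sinv invS t)); split; [by [] | exact: idem_mul_sinv |].
by rewrite -yactA // (proj1 (sinvP invS t)).
Qed.

Lemma teq_idem_act e s (z : Y) :
  inS deg gone s -> inS deg gone e -> idem e -> yact e (yact s z) = yact s z ->
  R (e, yact s z) (s, z).
Proof.
move=> s1 e1 ee ez.
have ss1 := inS_mul_sinv s.
apply: rst_trans (teq_idem_fix e1 ss1 ee (idem_mul_sinv invS s) ez _) _.
  by rewrite -yactA // (proj1 (sinvP invS s)).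
by apply: rst_sym; rewrite -{1}(proj1 (sinvP invS s)); apply: R_step.
Qed.

Lemma mu_iso_of_inverse : mu_iso Y.
Proof.
split; first exact: mu_well_defined.
have [e eP] := choice _ exists_idem_fixing.
have e1 y : inS deg gone (e y) by case: (eP y).
have ey y : yact (e y) y = y by case: (eP y).
have teq_e s z : inS deg gone s -> R (e (yact s z), yact s z) (s, z).
  by move=> s1; case: (eP (yact s z)) => *; apply: teq_idem_act.
exists (fun y => (e y, y)); do !split=> //=.
  by case=> s z /teq_e.
move=> t y t1; apply: rst_trans (teq_e t y t1) _.
by rewrite -{1}(ey y); apply: rst_sym; apply: R_step.
Qed.

End Restriction.

Section Induction.
Variable X : GrSSet deg.
Local Notation R := (teq deg (@act _ X) (inX gone)).
Let R_step s t (x : X) (t1 : inS deg gone t) (x1 : inX gone x) :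
  R (smul s t, x) (s, act t x) := teq_step s t x t1 x1.
Arguments R_step : clear implicits.

Lemma nu_well_defined p q : R p q -> act p.1 p.2 = act q.1 q.2.
Proof.
by apply: (teq_fun_eq (f := fun u : S * X => act u.1 u.2)) => s t x _ _ /=; rewrite actA.
Qed.

Lemma gdeg_act_unit t (z : X) :
  inX gone z -> act t z <> xzero X -> gdeg (act t z) = deg t.
Proof.
move=> [-> | z1] tz0; first by case: tz0; rewrite act_xzero.
by rewrite gdegP // z1 gmul1r.
Qed.

Lemma teq_sinv_mul s (z : X) :
  inX gone z -> R (s, z) (s, act (smul (sinv invS s) s) z).
Proof. by move=> z1; have := R_step s _ z (inS_sinv_mul s) z1; rewrite mul_sinvK. Qed.

Lemma teq_act_zero s (z : X) :
  inX gone z -> act s z = xzero X -> R (s, z) (szero, xzero X).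
Proof.
move=> z1 sz0; apply: rst_trans (teq_sinv_mul s z1) _.
rewrite actA sz0 act_xzero; apply: rst_sym.
by have := R_step s szero (xzero X) (inS0 gone) (or_introl erefl); rewrite smul0r act0.
Qed.

Lemma teq_idem_mul s f (z : X) :
  inX gone z -> inS deg gone f -> idem f -> act f (act s z) = act s z ->
  R (s, z) (smul f s, z).
Proof.
move=> z1 f1 ff fz; apply: rst_trans (teq_sinv_mul s z1) _.
set w := smul (sinv invS s) (smul f s).
have w1 : inS deg gone w.
  have -> : gone = gmul (ginv (deg s)) (gmul gone (deg s)) by rewrite gmul1 gmulV.
  exact: inS_mul (inS_sinv (inS_deg s)) (inS_mul f1 (inS_deg s)).
have sw : smul s w = smul f s.
  by rewrite /w !smulA (idem_comm invS (idem_mul_sinv invS s) ff) -!smulA mul_sinvK.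
have wz : act w z = act (smul (sinv invS s) s) z by rewrite /w !actA fz.
by rewrite -wz -sw; apply: rst_sym; apply: R_step.
Qed.

Lemma teq_of_act_eq p q :
  inX gone p.2 -> inX gone q.2 -> act p.1 p.2 = act q.1 q.2 -> R p q.
Proof.
case: p q => s z [s' z'] /= z1 z1' e.
case: (classic (act s z = xzero X)) => [sz0 | sz0].
  apply: rst_trans (teq_act_zero z1 sz0) (rst_sym _ _ _ _ (teq_act_zero z1' _)).
  by rewrite -e.
have dss' : deg s' = deg s.
  by rewrite -(gdeg_act_unit z1 sz0) e gdeg_act_unit // -e.
set i' := sinv invS s'.
have u1 : inS deg gone (smul i' s).
  by rewrite -(gmulV (deg s')) {2}dss'; apply: inS_mul (inS_sinv (inS_deg s')) (inS_deg s).
have fix_sz : act (smul s' i') (act s z) = act s z.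
  by rewrite e -actA (proj1 (sinvP invS s')).
apply: rst_trans (teq_idem_mul z1 (inS_mul_sinv s') (idem_mul_sinv invS s') fix_sz) _.
apply: rst_trans (rst_sym _ _ _ _ (teq_sinv_mul s' z1')).
by rewrite -smulA actA -e -actA; apply: R_step.
Qed.

Lemma homogeneous_preimage (x : X) : strongly_graded deg ->
  exists p : S * X,
    [/\ inX gone p.2, act p.1 p.2 = x & forall a, inX a x -> inS deg a p.1].
Proof.
move=> strongS.
case: (classic (x = xzero X)) => [-> | x0].
  by exists (szero, xzero X); split; [left | exact: act0 | move=> a _; left].
have [s [x' xsx']] := xunital x.
have s0 : s <> szero by move=> s0; apply: x0; rewrite xsx' s0 act0.
have dx : gdeg x = gmul (deg s) (gdeg x') by rewrite xsx' gdegP // -xsx'.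
set a := gdeg x.
have sa : inS deg (gmul a (gmul (ginv a) (deg s))) s.
  by rewrite gmulA gmulVr gmul1; exact: inS_deg.
have [u [w [ua [wa esw]]]] := proj1 (strongS _ _ s) sa.
exists (u, act w x'); split=> /=; last by move=> b [// | <-].
  case: (classic (act w x' = xzero X)) => [| wx0]; [by left | right].
  have w0 : w <> szero by move=> w0; apply: wx0; rewrite w0 act0.
  have dw : deg w = gmul (ginv a) (deg s) by case: wa => // /w0.
  by rewrite gdegP // dw -gmulA -dx gmulV.
by rewrite -actA -esw -xsx'.
Qed.

Lemma nu_iso_of_strongly_graded : strongly_graded deg -> nu_iso X.
Proof.
move=> strongS; split=> [p q _ _|]; first exact: nu_well_defined.
have [g gP] := choice _ (homogeneous_preimage^~ strongS).
have g1 x : inX gone (g x).2 by case: (gP x).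
have gK x : act (g x).1 (g x).2 = x by case: (gP x).
exists g; do !split=> //.
- by move=> p p1; apply: teq_of_act_eq; rewrite ?gK.
- by move=> s x; apply: teq_of_act_eq; rewrite //= gK actA gK.
- move=> a x xa; exists (g x); split; first by case: (gP x) => _ _; apply.
  by split; [exact: g1 | exact: rst_refl].
Qed.

End Induction.

Lemma regular_unital (x : S) : exists s y, x = smul s y.
Proof. by exists x, (smul (sinv invS x) x); rewrite mul_sinvK. Qed.

Definition regular_sset : SSet S :=
  Build_SSet (fun s t x => esym (smulA s t x)) (@smul0l S) regular_unital.

Lemma regular_shift_gdegP b s (x : regular_sset) :
  act s x <> xzero regular_sset ->
  gmul (deg (act s x)) b = gmul (deg s) (gmul (deg x) b).
Proof. by move=> sx0; rewrite gradedS // gmulA. Qed.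

(* Its component of degree a is S_(a b⁻¹). *)
Definition regular_shift b : GrSSet deg :=
  Build_GrSSet (regular_shift_gdegP b).

Lemma strongly_graded_of_nu_iso :
  (forall X : GrSSet deg, nu_iso X) -> strongly_graded deg.
Proof.
move=> nuS a b u; split; last by case=> [s [t [sa [tb ->]]]]; apply: inS_mul.
case=> [-> | du].
  by exists szero, szero; rewrite smul0l; split; [left | split; [left |]].
have [nu_wd [g [g1 [gK [_ [_ g_homog]]]]]] := nuS (regular_shift (ginv b)).
have ua : inX (X := regular_shift (ginv b)) a u.
  by right; rewrite /= du -gmulA gmulVr gmul1r.
have [[s t] [sa [t1 gst]]] := g_homog a u ua.
exists s, t; split=> //; split.
  have [-> | tb] : t = szero \/ gmul (deg t) (ginv b) = gone := t1; [by left | right].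
  by apply: (@gmulIr _ (ginv b)); rewrite tb gmulVr.
by have := nu_wd _ _ (g1 u) t1 gst; rewrite gK.
Qed.

End GradedSemigroup.

Unset Implicit Arguments.
Theorem theorem5p8 (G : Group) (S : Semigroup0) (deg : S -> G) :
  graded deg -> inverse_semigroup S ->
  (strongly_graded deg <->
     (forall Y : SeSet deg, mu_iso Y) /\ (forall X : GrSSet deg, nu_iso X)).
Proof.
move=> gradedS invS; split.
- move=> strongS; split=> [Y | X].
  + exact: mu_iso_of_inverse.
  + exact: nu_iso_of_strongly_graded.
- by case=> _; apply: strongly_graded_of_nu_iso.
Qed.
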